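(* Let $k$ be a finite field and $r\ge2$. Every axiom of the series $\Phi7$ is true in the free metabelian Lie algebra $F_r$.
   Context: Products are left-normed. $F_n$ is the free metabelian Lie algebra over $k$ of rank $n$ with free base $a_1,\dots,a_n$; $\mathrm{Fit}(F_n)=F_n^2$ is a module over $R_n=k[x_1,\dots,x_n]$ via $u\cdot x_i=ua_i$. $y\cdot f(x_1,\dots,x_n)$ is the Lie term where monomial $x_{i_1}\cdots x_{i_t}$ acts by $y\mapsto yx_{i_1}\cdots x_{i_t}$, extended linearly. Let $\mathrm{Fit}(x)\equiv\forall y\,(xyx=0)$ and $\varphi(x_1..x_n)\equiv\bigwedge_{(\alpha_i)\in k^n\setminus\{0\}}\neg\mathrm{Fit}(\sum\alpha_ix_i)$. The series $\Phi7$: for every $n\le r$ and every finite system $S$: $y_1f_{i1}+\dots+y_lf_{il}=c_i$ ($i=1..m$, $f_{ij}\in R_n$, $c_i\in\mathrm{Fit}(F_n)$) that has no solution in the localisation $\mathrm{Fit}(F_n)_\Delta=(R_n\setminus\Delta)^{-1}\mathrm{Fit}(F_n)$, $\Delta=(x_1,\dots,x_n)$, the sentence $\forall x_1..x_n\forall y_1..y_l\,\big(\varphi(x_1..x_n)\wedge\bigwedge_{j=1}^l\bigwedge_{i=1}^ny_jx_iy_j=0\to\bigvee_{i=1}^m h_i\ne0\big)$, where $h_i=\sum_jy_j\cdot f_{ij}(x_1..x_n)-c_i(x_1..x_n)$ and $c_i(x_1..x_n)$ is a Lie polynomial representing $c_i$ with each $a_j$ replaced by $x_j$. *)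

From HB Require Import structures.
From mathcomp Require Import all_boot all_order all_algebra.
From mathcomp Require Import mpoly.

Set Implicit Arguments.
Unset Strict Implicit.
Unset Printing Implicit Defensive.

Import GRing.Theory.
Local Open Scope ring_scope.

(* LBr a b is the product  a b  (products are left-normed).            *)
Inductive lterm (k : Type) (V : Type) : Type :=
| LVar   of V
| LZero
| LAdd   of lterm k V & lterm k V
| LScale of k & lterm k V
| LBr    of lterm k V & lterm k V.

Arguments LZero {k V}.
Arguments LVar {k V} _.
Arguments LAdd {k V} _ _.
Arguments LScale {k V} _ _.
Arguments LBr {k V} _ _.

Section Terms.
Variables (k : fieldType).

(* The identities of metabelian Lie algebras over k.  [eqv] is the smallest
   congruence on terms containing all instances of the k-vector-space axioms,
   bilinearity, anticommutativity (aa = 0), the Jacobi identity and the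
   metabelian identity (ab)(cd) = 0.  Terms over V modulo [eqv] form the free
   metabelian Lie algebra over k with free base V.                          *)
Inductive eqv {V : Type} : lterm k V -> lterm k V -> Prop :=
| eqv_refl a : eqv a a
| eqv_sym a b : eqv a b -> eqv b a
| eqv_trans a b c : eqv a b -> eqv b c -> eqv a c
| eqv_add a a' b b' : eqv a a' -> eqv b b' -> eqv (LAdd a b) (LAdd a' b')
| eqv_scale c a a' : eqv a a' -> eqv (LScale c a) (LScale c a')
| eqv_br a a' b b' : eqv a a' -> eqv b b' -> eqv (LBr a b) (LBr a' b')
| eqv_addA a b c : eqv (LAdd a (LAdd b c)) (LAdd (LAdd a b) c)
| eqv_addC a b : eqv (LAdd a b) (LAdd b a)
| eqv_add0 a : eqv (LAdd LZero a) a
| eqv_addN a : eqv (LAdd a (LScale (-1) a)) LZero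
| eqv_scaleA c d a : eqv (LScale c (LScale d a)) (LScale (c * d) a)
| eqv_scale1 a : eqv (LScale 1 a) a
| eqv_scaleDr c a b : eqv (LScale c (LAdd a b)) (LAdd (LScale c a) (LScale c b))
| eqv_scaleDl c d a : eqv (LScale (c + d) a) (LAdd (LScale c a) (LScale d a))
| eqv_brDl a b c : eqv (LBr (LAdd a b) c) (LAdd (LBr a c) (LBr b c))
| eqv_brDr a b c : eqv (LBr a (LAdd b c)) (LAdd (LBr a b) (LBr a c))
| eqv_brZl s a b : eqv (LBr (LScale s a) b) (LScale s (LBr a b))
| eqv_brZr s a b : eqv (LBr a (LScale s b)) (LScale s (LBr a b))
| eqv_alt a : eqv (LBr a a) LZero
| eqv_jacobi a b c :
    eqv (LAdd (LAdd (LBr (LBr a b) c) (LBr (LBr b c) a)) (LBr (LBr c a) b)) LZero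
| eqv_metab a b c d : eqv (LBr (LBr a b) (LBr c d)) LZero.

Definition lsum {V} (s : seq (lterm k V)) : lterm k V := foldr (@LAdd k V) LZero s.
Definition lsub {V} (a b : lterm k V) : lterm k V := LAdd a (LScale (-1) b).

Fixpoint lsubst {V W} (x : V -> lterm k W) (t : lterm k V) : lterm k W :=
  match t with
  | LVar v => x v
  | LZero => LZero
  | LAdd a b => LAdd (lsubst x a) (lsubst x b)
  | LScale c a => LScale c (lsubst x a)
  | LBr a b => LBr (lsubst x a) (lsubst x b)
  end.

(* F^2 : the span of all products (scalar multiples of products are products) *)
Definition in_sq {V} (t : lterm k V) : Prop :=
  exists ps : seq (lterm k V * lterm k V), eqv t (lsum [seq LBr p.1 p.2 | p <- ps]).

(* y . x^mm  :  y x_1 ... x_1 x_2 ... x_n  (x_i repeated mm_i times) *)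
Definition act_mono {V} n (x : 'I_n -> lterm k V) (y : lterm k V) (mm : 'X_{1..n})
  : lterm k V :=
  foldl (fun acc i => iter (mm i) (fun z => LBr z (x i)) acc) y (enum 'I_n).

Definition pact {V} n (x : 'I_n -> lterm k V) (y : lterm k V) (f : {mpoly k[n]})
  : lterm k V :=
  lsum [seq LScale (f@_mm) (act_mono x y mm) | mm <- msupp f].

Definition gens n : 'I_n -> lterm k 'I_n := fun i => LVar i.

Definition in_Delta n (p : {mpoly k[n]}) : Prop :=
  exists g : 'I_n -> {mpoly k[n]}, p = \sum_(i < n) g i * 'X_i.

Definition sys_lhs {V} n l m (f : 'I_m -> 'I_l -> {mpoly k[n]})
  (x : 'I_n -> lterm k V) (y : 'I_l -> lterm k V) (i : 'I_m) : lterm k V :=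
  lsum [seq pact x (y j) (f i j) | j <- enum 'I_l].

(* The system  y_1 f_i1 + ... + y_l f_il = c_i  (i < m) has a solution in the
   localisation Fit(F_n)_Delta = (R_n \ Delta)^{-1} Fit(F_n).  Writing the
   unknowns over a common denominator y_j = u_j / s (u_j in Fit(F_n),
   s not in Delta), the equation  (sum_j u_j f_ij)/s = c_i/1  in the
   localisation means  t (sum_j u_j f_ij - s c_i) = 0  in Fit(F_n) for some
   t not in Delta.                                                         *)
Definition loc_solvable n l m (f : 'I_m -> 'I_l -> {mpoly k[n]})
  (c : 'I_m -> lterm k 'I_n) : Prop :=
  exists (s t : {mpoly k[n]}) (u : 'I_l -> lterm k 'I_n),
    ~ in_Delta s /\ ~ in_Delta t /\ (forall j, in_sq (u j)) /\
    forall i : 'I_m,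
      eqv (pact (@gens n) (lsub (sys_lhs f (@gens n) u i) (pact (@gens n) (c i) s)) t)
          LZero.

Definition FitF r (z : lterm k 'I_r) : Prop :=
  forall w : lterm k 'I_r, eqv (LBr (LBr z w) z) LZero.

Definition phiF r n (x : 'I_n -> lterm k 'I_r) : Prop :=
  forall alpha : 'I_n -> k, (exists i, alpha i != 0) ->
    ~ FitF (lsum [seq LScale (alpha i) (x i) | i <- enum 'I_n]).

Definition Phi7_sentence_holds r n l m (f : 'I_m -> 'I_l -> {mpoly k[n]})
  (c : 'I_m -> lterm k 'I_n) : Prop :=
  forall (x : 'I_n -> lterm k 'I_r) (y : 'I_l -> lterm k 'I_r),
    phiF x ->
    (forall (j : 'I_l) (i : 'I_n), eqv (LBr (LBr (y j) (x i)) (y j)) LZero) ->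
    exists i : 'I_m, ~ eqv (lsub (sys_lhs f x y i) (lsubst x (c i))) LZero.

End Terms.

(* Suppose all h_i vanish at some x, y satisfying the hypotheses.  By phi the linear parts
   of x_1, ..., x_n are linearly independent: a nontrivial combination with zero linear part
   would lie in F^2 and hence satisfy Fit.  For n >= 2, y_j x_i y_j = 0 forces the linear
   parts of y_j and x_i to be proportional (as a 4-dimensional test algebra detects), so
   y_j lies in F^2.  A homomorphism F_r -> F_n sending each x_i to a_i modulo F^2 carries the
   relations into F_n: the substitution tau : a_i |-> X_i maps (c_i) into the image N of the
   system, an R_n-submodule of F_n^2.  On F^2, tau is R_n-linear and acts on the generators
   a_a a_b by a matrix M congruent to 1 modulo Delta, so by Cayley-Hamilton N contains
   s (c_i) with s = (char_poly M)(0), which is not in Delta: the system is solvable in the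
   localisation.  For n <= 1, F_n^2 = 0. *)

From HB Require Import structures.
From mathcomp Require Import all_boot all_order all_algebra.
From mathcomp Require Import mpoly.
From mathcomp Require Import boolp ring.

Set Implicit Arguments.
Unset Strict Implicit.
Unset Printing Implicit Defensive.
Import GRing.Theory.
Local Open Scope ring_scope.

Section FreeMetabelian.
Variables (k : fieldType) (V : Type).

(* An element is an [eqv]-class, represented by the predicate [eqv t]. *)
Definition fml := {P : lterm k V -> Prop | exists t, P = eqv t}.
Definition lpi (t : lterm k V) : fml := exist _ (eqv t) (ex_intro _ t erefl).

Lemma lpi_eq a b : lpi a = lpi b <-> eqv a b.
Proof.
split => [/(congr1 sval) /= eab | ab].
  by rewrite eab; apply: eqv_refl.
apply: eq_exist; apply: funext => t; apply: propext.
by split => [|h]; [apply: eqv_trans (eqv_sym ab) | apply: eqv_trans ab h].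
Qed.

Definition lrepr (q : fml) : lterm k V := projT1 (cid (proj2_sig q)).

Lemma lreprK q : lpi (lrepr q) = q.
Proof.
rewrite /lrepr; case: (cid _) => t /= e.
by case: q e => P hP /= e; apply: eq_exist; rewrite e.
Qed.

Lemma lpi_repr t : eqv (lrepr (lpi t)) t.
Proof. by apply/lpi_eq; rewrite lreprK. Qed.

Lemma fml_ind (P : fml -> Prop) : (forall t, P (lpi t)) -> forall q, P q.
Proof. by move=> h q; rewrite -(lreprK q). Qed.

HB.instance Definition _ := gen_eqMixin fml.
HB.instance Definition _ := gen_choiceMixin fml.

Fact fml_key : unit. Proof. by []. Qed.
Definition fml_add := locked_with fml_key (fun a b => lpi (LAdd (lrepr a) (lrepr b))).
Definition fml_opp := locked_with fml_key (fun a => lpi (LScale (-1) (lrepr a))).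
Definition fml_scale := locked_with fml_key (fun c a => lpi (LScale c (lrepr a))).
Definition lbr := locked_with fml_key (fun a b => lpi (LBr (lrepr a) (lrepr b))).

Lemma lpi_add a b : lpi (LAdd a b) = fml_add (lpi a) (lpi b).
Proof.
by rewrite /fml_add unlock; apply/lpi_eq; apply: eqv_add; apply: eqv_sym; apply: lpi_repr.
Qed.
Lemma lpi_opp a : lpi (LScale (-1) a) = fml_opp (lpi a).
Proof.
rewrite /fml_opp unlock; apply/lpi_eq.
by apply: eqv_scale; apply: eqv_sym; apply: lpi_repr.
Qed.
Lemma lpi_scale c a : lpi (LScale c a) = fml_scale c (lpi a).
Proof.
rewrite /fml_scale unlock; apply/lpi_eq.
by apply: eqv_scale; apply: eqv_sym; apply: lpi_repr.
Qed.
Lemma lpi_br a b : lpi (LBr a b) = lbr (lpi a) (lpi b).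
Proof.
by rewrite /lbr unlock; apply/lpi_eq; apply: eqv_br; apply: eqv_sym; apply: lpi_repr.
Qed.

Lemma fml_addA : associative fml_add.
Proof.
elim/fml_ind=> a; elim/fml_ind=> b; elim/fml_ind=> c.
by rewrite -!lpi_add; apply/lpi_eq; apply: eqv_addA.
Qed.
Lemma fml_addC : commutative fml_add.
Proof.
by elim/fml_ind=> a; elim/fml_ind=> b; rewrite -!lpi_add; apply/lpi_eq; apply: eqv_addC.
Qed.
Lemma fml_add0 : left_id (lpi LZero) fml_add.
Proof. by elim/fml_ind=> a; rewrite -lpi_add; apply/lpi_eq; apply: eqv_add0. Qed.
Lemma fml_addN : left_inverse (lpi LZero) fml_opp fml_add.
Proof.
elim/fml_ind=> a; rewrite -lpi_opp -lpi_add; apply/lpi_eq.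
exact: eqv_trans (eqv_addC _ _) (eqv_addN _).
Qed.

HB.instance Definition _ := GRing.isZmodule.Build fml fml_addA fml_addC fml_add0 fml_addN.

Lemma lpiD a b : lpi (LAdd a b) = lpi a + lpi b. Proof. exact: lpi_add. Qed.
Lemma lpi0 : lpi LZero = 0. Proof. by []. Qed.

Lemma fml_scaleA a b v : fml_scale a (fml_scale b v) = fml_scale (a * b) v.
Proof. by elim/fml_ind: v => v; rewrite -!lpi_scale; apply/lpi_eq; apply: eqv_scaleA. Qed.
Lemma fml_scale1 : left_id 1 fml_scale.
Proof. by elim/fml_ind=> v; rewrite -!lpi_scale; apply/lpi_eq; apply: eqv_scale1. Qed.
Lemma fml_scaleDr : right_distributive fml_scale +%R.
Proof.
move=> c; elim/fml_ind=> a; elim/fml_ind=> b.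
by rewrite -lpiD -!lpi_scale -lpiD; apply/lpi_eq; apply: eqv_scaleDr.
Qed.
Lemma fml_scaleDl v : {morph fml_scale^~ v : a b / a + b}.
Proof.
by elim/fml_ind: v => v a b; rewrite -!lpi_scale -lpiD; apply/lpi_eq; apply: eqv_scaleDl.
Qed.

HB.instance Definition _ :=
  GRing.Zmodule_isLmodule.Build k fml fml_scaleA fml_scale1 fml_scaleDr fml_scaleDl.

Lemma lpiZ c a : lpi (LScale c a) = c *: lpi a. Proof. exact: lpi_scale. Qed.

Lemma lpi_lsum (s : seq (lterm k V)) : lpi (lsum s) = \sum_(t <- s) lpi t.
Proof. by elim: s => [|t s IH]; rewrite ?big_nil ?big_cons // -IH -lpiD. Qed.
Lemma lpi_lsub a b : lpi (lsub a b) = lpi a - lpi b.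
Proof. by rewrite lpiD lpiZ scaleN1r. Qed.

Lemma lbrDl a b c : lbr (a + b) c = lbr a c + lbr b c.
Proof.
move: a b c; elim/fml_ind=> a; elim/fml_ind=> b; elim/fml_ind=> c.
by rewrite -!lpi_br -!lpiD -!lpi_br; apply/lpi_eq; apply: eqv_brDl.
Qed.
Lemma lbrDr a b c : lbr a (b + c) = lbr a b + lbr a c.
Proof.
move: a b c; elim/fml_ind=> a; elim/fml_ind=> b; elim/fml_ind=> c.
by rewrite -!lpi_br -!lpiD -!lpi_br; apply/lpi_eq; apply: eqv_brDr.
Qed.
Lemma lbrZl s a b : lbr (s *: a) b = s *: lbr a b.
Proof.
move: a b; elim/fml_ind=> a; elim/fml_ind=> b.
by rewrite -!lpi_br -!lpiZ -!lpi_br; apply/lpi_eq; apply: eqv_brZl.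
Qed.
Lemma lbrZr s a b : lbr a (s *: b) = s *: lbr a b.
Proof.
move: a b; elim/fml_ind=> a; elim/fml_ind=> b.
by rewrite -!lpi_br -!lpiZ -!lpi_br; apply/lpi_eq; apply: eqv_brZr.
Qed.
Lemma lbrr a : lbr a a = 0.
Proof. by elim/fml_ind: a => a; rewrite -lpi_br -lpi0; apply/lpi_eq; apply: eqv_alt. Qed.
Lemma lbr_jacobi a b c : lbr (lbr a b) c + lbr (lbr b c) a + lbr (lbr c a) b = 0.
Proof.
move: a b c; elim/fml_ind=> a; elim/fml_ind=> b; elim/fml_ind=> c.
by rewrite -!lpi_br -!lpiD -lpi0; apply/lpi_eq; apply: eqv_jacobi.
Qed.
Lemma lbr_metab a b c d : lbr (lbr a b) (lbr c d) = 0.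
Proof.
move: a b c d; elim/fml_ind=> a; elim/fml_ind=> b; elim/fml_ind=> c; elim/fml_ind=> d.
by rewrite -!lpi_br -lpi0; apply/lpi_eq; apply: eqv_metab.
Qed.

Lemma lbr0l a : lbr 0 a = 0.
Proof. by apply: (@addIr _ (lbr 0 a)); rewrite -lbrDl !add0r. Qed.
Lemma lbr0r a : lbr a 0 = 0.
Proof. by apply: (@addIr _ (lbr a 0)); rewrite -lbrDr !add0r. Qed.
Lemma lbrNl a b : lbr (- a) b = - lbr a b.
Proof. by rewrite -scaleN1r lbrZl scaleN1r. Qed.
Lemma lbrC a b : lbr a b = - lbr b a.
Proof.
apply/eqP; rewrite -subr_eq0 opprK; have := lbrr (a + b).
by rewrite lbrDl !lbrDr !lbrr add0r addr0 => ->.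
Qed.
Lemma lbr_suml I (s : seq I) (P : pred I) (F : I -> fml) b :
  lbr (\sum_(i <- s | P i) F i) b = \sum_(i <- s | P i) lbr (F i) b.
Proof. by apply: (big_morph (lbr^~ b)) => [x y|]; rewrite ?lbrDl ?lbr0l. Qed.
Lemma lbr_sumr I (s : seq I) (P : pred I) (F : I -> fml) b :
  lbr b (\sum_(i <- s | P i) F i) = \sum_(i <- s | P i) lbr b (F i).
Proof. by apply: (big_morph (lbr b)) => [x y|]; rewrite ?lbrDr ?lbr0r. Qed.

Definition derived (q : fml) := exists ps : seq (fml * fml), q = \sum_(p <- ps) lbr p.1 p.2.

Lemma derived0 : derived 0. Proof. by exists [::]; rewrite big_nil. Qed.
Lemma derived_lbr a b : derived (lbr a b). Proof. by exists [:: (a, b)]; rewrite big_seq1. Qed.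
Lemma derivedD a b : derived a -> derived b -> derived (a + b).
Proof. by move=> [p ->] [q ->]; exists (p ++ q); rewrite big_cat. Qed.
Lemma derivedZ c a : derived a -> derived (c *: a).
Proof.
move=> [p ->]; exists [seq (c *: x.1, x.2) | x <- p].
by rewrite big_map scaler_sumr; apply: eq_bigr => x _; rewrite lbrZl.
Qed.
Lemma derived_sum I (s : seq I) (P : pred I) (F : I -> fml) :
  (forall i, P i -> derived (F i)) -> derived (\sum_(i <- s | P i) F i).
Proof.
move=> h; elim/big_rec: _ => [|i x Pi hx]; first exact: derived0.
by apply: derivedD => //; apply: h.
Qed.

Lemma in_sq_derived (t : lterm k V) : in_sq t <-> derived (lpi t).
Proof.
split => [[ps /lpi_eq ->] | [ps e]].
  exists [seq (lpi p.1, lpi p.2) | p <- ps].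
  by rewrite lpi_lsum !big_map; apply: eq_bigr => p _; rewrite lpi_br.
exists [seq (lrepr p.1, lrepr p.2) | p <- ps]; apply/lpi_eq.
by rewrite e lpi_lsum !big_map; apply: eq_bigr => p _; rewrite lpi_br !lreprK.
Qed.

Lemma lbr_derived a b : derived a -> derived b -> lbr a b = 0.
Proof.
move=> [p ->] [q ->]; rewrite lbr_suml big1 // => x _.
by rewrite lbr_sumr big1 // => y _; rewrite lbr_metab.
Qed.

(* By Jacobi, the adjoint actions commute on F^2: this makes F^2 a module over k[x_1..x_n]. *)
Lemma lbr_derivedAC u a b : derived u -> lbr (lbr u a) b = lbr (lbr u b) a.
Proof.
move=> hu; have := lbr_jacobi u a b.
rewrite (lbrC (lbr a b)) (lbr_derived hu (derived_lbr a b)) oppr0 addr0.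
by rewrite (lbrC b u) lbrNl => /eqP; rewrite subr_eq0 => /eqP.
Qed.

End FreeMetabelian.

Arguments lpi {k V}.
Arguments lbr {k V}.

Section Substitution.
Variables (k : fieldType) (V W : Type).

Lemma eqv_lsubst (s : V -> lterm k W) a b : eqv a b -> eqv (lsubst s a) (lsubst s b).
Proof. by elim=> /=; intros; try (by constructor); econstructor; eauto. Qed.

Lemma eqv_lsubst_ext (s s' : V -> lterm k W) t :
  (forall v, eqv (s v) (s' v)) -> eqv (lsubst s t) (lsubst s' t).
Proof. by move=> h; elim: t => /= *; try exact: h; constructor. Qed.

Definition fmlhom (x : V -> fml k W) (q : fml k V) : fml k W :=
  lpi (lsubst (fun v => lrepr (x v)) (lrepr q)).

Lemma fmlhom_lpi x t : fmlhom x (lpi t) = lpi (lsubst (fun v => lrepr (x v)) t).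
Proof. by apply/lpi_eq; apply: eqv_lsubst; apply: lpi_repr. Qed.

Lemma lpi_lsubst (x : V -> lterm k W) t :
  lpi (lsubst x t) = fmlhom (fun v => lpi (x v)) (lpi t).
Proof.
rewrite fmlhom_lpi; apply/lpi_eq; apply: eqv_lsubst_ext => v.
by apply: eqv_sym; apply: lpi_repr.
Qed.

Variable x : V -> fml k W.

Lemma fmlhomD a b : fmlhom x (a + b) = fmlhom x a + fmlhom x b.
Proof. by move: a b; elim/fml_ind=> a; elim/fml_ind=> b; rewrite -lpiD !fmlhom_lpi /= lpiD. Qed.
Lemma fmlhomZ c a : fmlhom x (c *: a) = c *: fmlhom x a.
Proof. by move: a; elim/fml_ind=> a; rewrite -lpiZ !fmlhom_lpi /= lpiZ. Qed.
Lemma fmlhom0 : fmlhom x 0 = 0.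
Proof. by rewrite -(lpi0 k V) fmlhom_lpi. Qed.
Lemma fmlhom_lbr a b : fmlhom x (lbr a b) = lbr (fmlhom x a) (fmlhom x b).
Proof.
by move: a b; elim/fml_ind=> a; elim/fml_ind=> b; rewrite -lpi_br !fmlhom_lpi /= lpi_br.
Qed.
Lemma fmlhom_var v : fmlhom x (lpi (LVar v)) = x v.
Proof. by rewrite fmlhom_lpi /= lreprK. Qed.
Lemma fmlhom_sum I (s : seq I) (P : pred I) (F : I -> fml k V) :
  fmlhom x (\sum_(i <- s | P i) F i) = \sum_(i <- s | P i) fmlhom x (F i).
Proof. by apply: (big_morph (fmlhom x)) => [a b|]; rewrite ?fmlhomD ?fmlhom0. Qed.
Lemma fmlhom_derived a : derived a -> derived (fmlhom x a).
Proof.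
move=> [p ->]; rewrite fmlhom_sum; apply: derived_sum => i _.
by rewrite fmlhom_lbr; apply: derived_lbr.
Qed.

End Substitution.

Lemma fmlhom_comp (k : fieldType) U V W (s : V -> fml k W) (x : U -> fml k V) q :
  fmlhom s (fmlhom x q) = fmlhom (fun v => fmlhom s (x v)) q.
Proof.
elim/fml_ind: q => t; elim: t => [v||a IHa b IHb|c a IH|a IHa b IHb].
- by rewrite !fmlhom_var.
- by rewrite lpi0 !fmlhom0.
- by rewrite lpiD !fmlhomD IHa IHb.
- by rewrite lpiZ !fmlhomZ IH.
- by rewrite lpi_br !fmlhom_lbr IHa IHb.
Qed.

Section PolyAction.
Variables (k : fieldType) (W : Type) (n : nat).
Local Notation L := (fml k W).
Implicit Types (x : 'I_n -> L) (c u v : L) (m : 'X_{1..n}) (p q : {mpoly k[n]}).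

Definition actm_seq x u m (s : seq 'I_n) :=
  foldl (fun acc i => iter (m i) (lbr^~ (x i)) acc) u s.
Definition actm x u m := actm_seq x u m (enum 'I_n).
Definition actp x u p := \sum_(m <- msupp p) p@_m *: actm x u m.

Lemma iter_lbrD c j u v : iter j (lbr^~ c) (u + v) = iter j (lbr^~ c) u + iter j (lbr^~ c) v.
Proof. by elim: j => //= j ->; rewrite lbrDl. Qed.
Lemma iter_lbrZ c j a u : iter j (lbr^~ c) (a *: u) = a *: iter j (lbr^~ c) u.
Proof. by elim: j => //= j ->; rewrite lbrZl. Qed.
Lemma iter_lbr0 c j : iter j (lbr^~ c) 0 = 0.
Proof. by elim: j => //= j ->; rewrite lbr0l. Qed.
Lemma iter_lbr_derived c j u : derived u -> derived (iter j (lbr^~ c) u).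
Proof. by case: j => //= j _; apply: derived_lbr. Qed.

Lemma actm_seqD x m s u v : actm_seq x (u + v) m s = actm_seq x u m s + actm_seq x v m s.
Proof. by elim: s u v => //= i s IH u v; rewrite iter_lbrD IH. Qed.
Lemma actm_seqZ x m s a u : actm_seq x (a *: u) m s = a *: actm_seq x u m s.
Proof. by elim: s u => //= i s IH u; rewrite iter_lbrZ IH. Qed.
Lemma actm_seq0 x m s : actm_seq x 0 m s = 0.
Proof. by elim: s => //= i s IH; rewrite iter_lbr0 IH. Qed.
Lemma actm_seq_derived x m s u : derived u -> derived (actm_seq x u m s).
Proof. by elim: s u => //= i s IH u hu; apply: IH; apply: iter_lbr_derived. Qed.
Lemma actm_seq_id x u m s : (forall i, i \in s -> m i = 0%N) -> actm_seq x u m s = u.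
Proof.
elim: s u => //= i s IH u h; rewrite h ?mem_head //= IH // => j js.
by rewrite h // inE js orbT.
Qed.

Lemma actp_supp x u p (s : seq 'X_{1..n}) : uniq s -> {subset msupp p <= s} ->
  actp x u p = \sum_(m <- s) p@_m *: actm x u m.
Proof.
move=> us sub; rewrite (bigID (mem (msupp p))) /=.
rewrite [X in _ + X]big1 ?addr0; last by move=> m /memN_msupp_eq0 ->; rewrite scale0r.
rewrite -big_filter /actp; apply: perm_big.
apply: uniq_perm; rewrite ?filter_uniq ?msupp_uniq //.
by move=> m; rewrite mem_filter; apply/idP/andP => [h|[]//]; split => //; apply: sub.
Qed.

Lemma actpDr x u p q : actp x u (p + q) = actp x u p + actp x u q.
Proof.
set s := undup (msupp p ++ msupp q ++ msupp (p + q)).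
rewrite !(@actp_supp _ _ _ s);
  try by [apply: undup_uniq | move=> m hm; rewrite mem_undup !mem_cat hm ?orbT].
by rewrite -big_split; apply: eq_bigr => m _; rewrite mcoeffD scalerDl.
Qed.
Lemma actpZr x u a p : actp x u (a *: p) = a *: actp x u p.
Proof.
set s := undup (msupp p ++ msupp (a *: p)).
rewrite !(@actp_supp _ _ _ s);
  try by [apply: undup_uniq | move=> m hm; rewrite mem_undup !mem_cat hm ?orbT].
by rewrite scaler_sumr; apply: eq_bigr => m _; rewrite mcoeffZ scalerA.
Qed.
Lemma actp0r x u : actp x u 0 = 0.
Proof. by rewrite /actp msupp0 big_nil. Qed.
Lemma actpNr x u p : actp x u (- p) = - actp x u p.
Proof. by rewrite -scaleN1r actpZr scaleN1r. Qed.
Lemma actp_sumr x u I (r : seq I) (P : pred I) (F : I -> {mpoly k[n]}) :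
  actp x u (\sum_(i <- r | P i) F i) = \sum_(i <- r | P i) actp x u (F i).
Proof. by apply: (big_morph (actp x u)) => [a b|]; rewrite ?actpDr ?actp0r. Qed.
Lemma actpX x u m : actp x u 'X_[m] = actm x u m.
Proof. by rewrite /actp msuppX big_seq1 mcoeffX eqxx scale1r. Qed.

Lemma actpDl x u v p : actp x (u + v) p = actp x u p + actp x v p.
Proof.
by rewrite /actp -big_split; apply: eq_bigr => m _; rewrite /actm actm_seqD scalerDr.
Qed.
Lemma actpZl x a u p : actp x (a *: u) p = a *: actp x u p.
Proof.
by rewrite /actp scaler_sumr; apply: eq_bigr => m _; rewrite /actm actm_seqZ !scalerA mulrC.
Qed.
Lemma actp0l x p : actp x 0 p = 0.
Proof. by rewrite /actp big1 // => m _; rewrite /actm actm_seq0 scaler0. Qed.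
Lemma actp_suml x p I (r : seq I) (P : pred I) (F : I -> L) :
  actp x (\sum_(i <- r | P i) F i) p = \sum_(i <- r | P i) actp x (F i) p.
Proof. by apply: (big_morph (actp x ^~ p)) => [a b|]; rewrite ?actpDl ?actp0l. Qed.
Lemma actp_derived x u p : derived u -> derived (actp x u p).
Proof. by move=> hu; apply: derived_sum => m _; apply: derivedZ; apply: actm_seq_derived. Qed.

Lemma actp1 x u : actp x u 1 = u.
Proof. by rewrite -mpolyX0 actpX; apply: actm_seq_id => i _; rewrite mnm0E. Qed.

Lemma actpXU x u a : actp x u 'X_a = lbr u (x a).
Proof.
rewrite actpX /actm; have : a \in enum 'I_n by rewrite mem_enum.
have : uniq (enum 'I_n) by apply: enum_uniq.
elim: (enum 'I_n) u => //= i s IH u /andP [nis us].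
rewrite inE mnm1E; case: (eqVneq a i) => [-> _ | ai /= /(IH _ us) -> //] /=.
rewrite actm_seq_id // => j js; rewrite mnm1E.
by case: (eqVneq i j) js nis => // <- ->.
Qed.

Lemma iter_lbr_derivedAC c j u d :
  derived u -> iter j (lbr^~ c) (lbr u d) = lbr (iter j (lbr^~ c) u) d.
Proof.
by move=> hu; elim: j => //= j ->; rewrite lbr_derivedAC //; apply: iter_lbr_derived.
Qed.
Lemma actm_seq_iter x m s u j c : derived u ->
  actm_seq x (iter j (lbr^~ c) u) m s = iter j (lbr^~ c) (actm_seq x u m s).
Proof.
have br_comm u' d : derived u' -> actm_seq x (lbr u' d) m s = lbr (actm_seq x u' m s) d.
  elim: s u' => //= i s IH u' hu'.
  by rewrite iter_lbr_derivedAC // IH //; apply: iter_lbr_derived.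
by move=> hu; elim: j => //= j IH; rewrite br_comm ?IH //; apply: iter_lbr_derived.
Qed.
Lemma actm_seqD_mnm x m1 m2 s u :
  derived u -> actm_seq x (actm_seq x u m1 s) m2 s = actm_seq x u (m1 + m2) s.
Proof.
elim: s u => //= i s IH u hu.
rewrite -actm_seq_iter; last exact: iter_lbr_derived.
rewrite IH; last by do 2 apply: iter_lbr_derived.
by rewrite mnmDE addnC iterD.
Qed.

Lemma actpM x u p q : derived u -> actp x (actp x u p) q = actp x u (p * q).
Proof.
move=> hu.
have actpXM m : actp x (actm x u m) q = actp x u ('X_[m] * q).
  rewrite [in RHS](mpolyE q) [in LHS](mpolyE q) mulr_sumr !actp_sumr.
  apply: eq_bigr => m' _.
  by rewrite actpZr -scalerAr actpZr actpX -mpolyXD actpX /actm actm_seqD_mnm.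
rewrite [in RHS](mpolyE p) mulr_suml [actp x u p]/actp actp_suml actp_sumr.
apply: eq_bigr => m _.
by rewrite actpZl -scalerAl actpZr actpXM.
Qed.

Lemma actp_derived_eq x y u p :
  (forall i, derived (x i - y i)) -> derived u -> actp x u p = actp y u p.
Proof.
move=> hxy hu; apply: eq_bigr => m _; congr (_ *: _); rewrite /actm.
elim: (enum 'I_n) u hu => //= i s IH u hu; rewrite -IH; last exact: iter_lbr_derived.
congr actm_seq; elim: (m i) => //= j ->.
rewrite -[x i](subrK (y i)) lbrDr (lbr_derived _ (hxy i)) ?add0r //.
by apply: iter_lbr_derived.
Qed.

End PolyAction.

Section TermAction.
Variables (k : fieldType) (V : Type) (n : nat).

Lemma lpi_pact (x : 'I_n -> lterm k V) y f :
  lpi (pact x y f) = actp (fun i => lpi (x i)) (lpi y) f.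
Proof.
rewrite /pact lpi_lsum big_map; apply: eq_bigr => m _; rewrite lpiZ; congr (_ *: _).
rewrite /act_mono /actm /actm_seq; elim: (enum 'I_n) y => //= i s IH y.
by rewrite IH; congr foldl; elim: (m i) => //= j IHj; rewrite lpi_br IHj.
Qed.

Lemma lpi_sys_lhs l m (f : 'I_m -> 'I_l -> {mpoly k[n]}) (x : 'I_n -> lterm k V)
    (y : 'I_l -> lterm k V) i :
  lpi (sys_lhs f x y i) = \sum_(j <- enum 'I_l) actp (fun i => lpi (x i)) (lpi (y j)) (f i j).
Proof. by rewrite /sys_lhs lpi_lsum big_map; apply: eq_bigr => j _; rewrite lpi_pact. Qed.

Lemma fmlhom_actp W (s : V -> fml k W) (x : 'I_n -> fml k V) u p :
  fmlhom s (actp x u p) = actp (fun i => fmlhom s (x i)) (fmlhom s u) p.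
Proof.
rewrite /actp fmlhom_sum; apply: eq_bigr => m _; rewrite fmlhomZ; congr (_ *: _).
rewrite /actm /actm_seq; elim: (enum 'I_n) u => //= i r IH u.
by rewrite IH; congr foldl; elim: (m i) => //= j IHj; rewrite fmlhom_lbr IHj.
Qed.

End TermAction.

Section LinearPart.
Variables (k : fieldType) (n : nat).
Local Notation L := (fml k 'I_n).
Local Notation K := #|{: 'I_n * 'I_n}|.

Fixpoint lin_term (w : 'I_n) (t : lterm k 'I_n) : k :=
  match t with
  | LVar v => (v == w)%:R
  | LZero => 0
  | LAdd a b => lin_term w a + lin_term w b
  | LScale c a => c * lin_term w a
  | LBr _ _ => 0
  end.

Lemma lin_term_eqv a b : eqv a b -> forall w, lin_term w a = lin_term w b.
Proof. by elim=> /=; intros; try ring; congruence. Qed.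

Definition gen (i : 'I_n) : L := lpi (LVar i).

Lemma sum_gen_delta v : \sum_w (v == w)%:R *: gen w = gen v.
Proof.
rewrite (bigD1 v) //= eqxx scale1r big1 ?addr0 // => w /negPf.
by rewrite eq_sym => ->; rewrite scale0r.
Qed.

(* The products a_a a_b, padded by one zero so that the index type has the form 'I_K.+1,
   as Cayley_Hamilton requires. *)
Definition gen2 (j : 'I_K.+1) : L :=
  if unlift ord_max j is Some j' then let: (a, b) := enum_val j' in lbr (gen a) (gen b)
  else 0.

Lemma gen2_lift a b : gen2 (lift ord_max (enum_rank (a, b))) = lbr (gen a) (gen b).
Proof. by rewrite /gen2 liftK enum_rankK. Qed.

Lemma gen2P j : gen2 j = 0 \/ exists a b, gen2 j = lbr (gen a) (gen b).
Proof.
rewrite /gen2; case: unlift => [j'|]; last by left.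
by case: enum_val => a b; right; exists a, b.
Qed.

Lemma gen2_derived j : derived (gen2 j).
Proof. by have [->|[a [b ->]]] := gen2P j; [apply: derived0 | apply: derived_lbr]. Qed.

Lemma gen2_delta j : gen2 j = \sum_l actp gen (gen2 l) (j == l)%:R.
Proof.
rewrite (bigD1 j) //= eqxx actp1 big1 ?addr0 // => i /negPf.
by rewrite eq_sym => ->; rewrite actp0r.
Qed.

Definition gen2_span (q : L) :=
  exists P : 'I_K.+1 -> {mpoly k[n]}, q = \sum_j actp gen (gen2 j) (P j).

Lemma actp_gen2_comb (P : 'I_K.+1 -> {mpoly k[n]}) p :
  actp gen (\sum_j actp gen (gen2 j) (P j)) p = \sum_j actp gen (gen2 j) (P j * p).
Proof. by rewrite actp_suml; apply: eq_bigr => j _; rewrite actpM //; apply: gen2_derived. Qed.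

Lemma gen2_span_derived q : gen2_span q -> derived q.
Proof.
by move=> [P ->]; apply: derived_sum => j _; apply: actp_derived; apply: gen2_derived.
Qed.

Lemma gen2_span0 : gen2_span 0.
Proof. by exists (fun _ => 0); rewrite big1 // => j _; rewrite actp0r. Qed.
Lemma gen2_spanD a b : gen2_span a -> gen2_span b -> gen2_span (a + b).
Proof.
move=> [P ->] [Q ->]; exists (fun j => P j + Q j).
by rewrite -big_split; apply: eq_bigr => j _; rewrite actpDr.
Qed.
Lemma gen2_spanZ c a : gen2_span a -> gen2_span (c *: a).
Proof.
move=> [P ->]; exists (fun j => c *: P j).
by rewrite scaler_sumr; apply: eq_bigr => j _; rewrite actpZr.
Qed.
Lemma gen2_span_sum I (r : seq I) (P : pred I) (F : I -> L) :
  (forall i, P i -> gen2_span (F i)) -> gen2_span (\sum_(i <- r | P i) F i).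
Proof.
move=> h; elim/big_rec: _ => [|i x Pi hx]; first exact: gen2_span0.
by apply: gen2_spanD => //; apply: h.
Qed.
Lemma gen2_span_lbr a b : gen2_span a -> gen2_span (lbr a (gen b)).
Proof.
move=> [P ->]; rewrite -actpXU; exists (fun j => P j * 'X_b).
rewrite actp_suml; apply: eq_bigr => j _; rewrite actpM //; exact: gen2_derived.
Qed.
Lemma gen2_span_gen2 a b : gen2_span (lbr (gen a) (gen b)).
Proof.
rewrite -gen2_lift; exists (fun l => (lift ord_max (enum_rank (a, b)) == l)%:R).
exact: gen2_delta.
Qed.

Lemma lin_term_decomp t : gen2_span (lpi t - \sum_w lin_term w t *: gen w).
Proof.
elim: t => [v||a IHa b IHb|c a IH|a IHa b IHb] /=.
- by rewrite sum_gen_delta subrr; apply: gen2_span0.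
- by rewrite lpi0 big1 ?subrr; [apply: gen2_span0 | move=> w _; rewrite scale0r].
- under eq_bigr do rewrite scalerDl.
  by rewrite lpiD big_split opprD addrACA; apply: gen2_spanD.
- under eq_bigr do rewrite -scalerA.
  by rewrite lpiZ -scaler_sumr -scalerBr; apply: gen2_spanZ.
- rewrite big1 => [|w _]; last by rewrite scale0r.
  rewrite subr0 lpi_br.
  set A := \sum_w _ *: gen w in IHa; set B := \sum_w _ *: gen w in IHb.
  rewrite -(subrK A (lpi a)) -(subrK B (lpi b)).
  move: (lpi a - A) (lpi b - B) IHa IHb => Ga Gb hGa hGb.
  rewrite lbrDl !lbrDr (lbr_derived (gen2_span_derived hGa) (gen2_span_derived hGb)) add0r.
  apply: gen2_spanD; last apply: gen2_spanD.
  + rewrite /B lbr_sumr; apply: gen2_span_sum => w _; rewrite lbrZr; apply: gen2_spanZ.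
    exact: gen2_span_lbr.
  + rewrite /A lbr_suml; apply: gen2_span_sum => w _; rewrite lbrZl; apply: gen2_spanZ.
    by rewrite lbrC -scaleN1r; apply: gen2_spanZ; apply: gen2_span_lbr.
  + rewrite /B lbr_sumr; apply: gen2_span_sum => w _; rewrite lbrZr; apply: gen2_spanZ.
    rewrite /A lbr_suml; apply: gen2_span_sum => w' _; rewrite lbrZl; apply: gen2_spanZ.
    exact: gen2_span_gen2.
Qed.

Definition lin (q : L) w := lin_term w (lrepr q).

Lemma lin_lpi t w : lin (lpi t) w = lin_term w t.
Proof. by apply: lin_term_eqv; apply: lpi_repr. Qed.

Lemma linD a b w : lin (a + b) w = lin a w + lin b w.
Proof. by move: a b; elim/fml_ind=> a; elim/fml_ind=> b; rewrite -lpiD !lin_lpi. Qed.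
Lemma linZ c a w : lin (c *: a) w = c * lin a w.
Proof. by move: a; elim/fml_ind=> a; rewrite -lpiZ !lin_lpi. Qed.
Lemma lin0 w : lin 0 w = 0.
Proof. by rewrite -lpi0 lin_lpi. Qed.
Lemma lin_sum I (r : seq I) (P : pred I) (F : I -> L) w :
  lin (\sum_(i <- r | P i) F i) w = \sum_(i <- r | P i) lin (F i) w.
Proof. by apply: (big_morph (lin ^~ w)) => [a b|]; rewrite ?linD ?lin0. Qed.
Lemma lin_gen i w : lin (gen i) w = (i == w)%:R.
Proof. exact: lin_lpi. Qed.

Lemma lin_derived q w : derived q -> lin q w = 0.
Proof.
move=> [p ->]; rewrite lin_sum big1 // => -[a b] _ /=.
by move: a b; elim/fml_ind=> a; elim/fml_ind=> b; rewrite -lpi_br lin_lpi.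
Qed.

Lemma lin_decomp q : gen2_span (q - \sum_w lin q w *: gen w).
Proof. by elim/fml_ind: q => t; under eq_bigr do rewrite lin_lpi; apply: lin_term_decomp. Qed.

Lemma derivedP q : derived q <-> forall w, lin q w = 0.
Proof.
split => [hq w|h]; first exact: lin_derived.
by have := gen2_span_derived (lin_decomp q); rewrite big1 ?subr0 // => w _; rewrite h scale0r.
Qed.

Lemma derived_gen2_span q : derived q -> gen2_span q.
Proof.
by move=> hq; have := lin_decomp q; rewrite big1 ?subr0 // => w _; rewrite lin_derived ?scale0r.
Qed.

End LinearPart.

Arguments gen {k n}.
Arguments gen2 {k n}.

Lemma lin_fmlhom (k : fieldType) r n (phi : 'I_r -> fml k 'I_n) q j :
  lin (fmlhom phi q) j = \sum_w lin q w * lin (phi w) j.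
Proof.
elim/fml_ind: q => t; rewrite fmlhom_lpi lin_lpi.
under eq_bigr do rewrite lin_lpi.
elim: t => [v||a IHa b IHb|c a IH|a _ b _] /=.
- rewrite (bigD1 v) //= eqxx mul1r big1 ?addr0 // => w.
  by rewrite eq_sym => /negPf ->; rewrite mul0r.
- by rewrite big1 // => w _; rewrite mul0r.
- by rewrite IHa IHb -big_split; apply: eq_bigr => w _; rewrite mulrDl.
- by rewrite IH mulr_sumr; apply: eq_bigr => w _; rewrite mulrA.
- by rewrite big1 // => w _; rewrite mul0r.
Qed.

(* A 4-dimensional metabelian Lie algebra: with e1, e2, e3, e4 the coordinate vectors,
   e1 e2 = e3 and e3 e1 = e4 are the only nonzero products of basis vectors. *)
Section TestAlgebra.
Variables (k : fieldType) (V : Type).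

Record tst := Tst { t1 : k; t2 : k; t3 : k; t4 : k }.

Definition tst_br a b :=
  Tst 0 0 (t1 a * t2 b - t2 a * t1 b) (t3 a * t1 b - t1 a * t3 b).

Fixpoint tst_eval (e : V -> tst) (t : lterm k V) : tst :=
  match t with
  | LVar v => e v
  | LZero => Tst 0 0 0 0
  | LAdd a b => let: (a, b) := (tst_eval e a, tst_eval e b) in
      Tst (t1 a + t1 b) (t2 a + t2 b) (t3 a + t3 b) (t4 a + t4 b)
  | LScale c a => let: a := tst_eval e a in Tst (c * t1 a) (c * t2 a) (c * t3 a) (c * t4 a)
  | LBr a b => tst_br (tst_eval e a) (tst_eval e b)
  end.

Lemma tst_eval_eqv e a b : eqv a b -> tst_eval e a = tst_eval e b.
Proof.
elim=> /=; intros; try congruence; rewrite /tst_br /=; try (congr Tst; ring);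
  by case: (tst_eval e _) => ????; rewrite /= ?add0r ?mul1r.
Qed.

End TestAlgebra.

Section TestEvaluation.
Variables (k : fieldType) (r : nat).
Implicit Types (p q : 'I_r) (t x y : lterm k 'I_r).

Lemma tst_eval_lin p q t :
  let e w := Tst (w == p)%:R (w == q)%:R 0 0 in
  t1 (tst_eval e t) = lin_term p t /\ t2 (tst_eval e t) = lin_term q t.
Proof.
move=> e; elim: t => [v||a [Ya1 Ya2] b [Yb1 Yb2]|c a [Y1 Y2]|a _ b _] //=.
- by rewrite Ya1 Ya2 Yb1 Yb2.
- by rewrite Y1 Y2.
Qed.

(* Evaluating y x y in the test algebra at a_p -> e1, a_q -> e2 (other generators -> 0)
   gives (b_p a_q - b_q a_p) b_p e4, where a and b are the linear parts of x and y. *)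
Lemma lin_term_wedge y x : eqv (LBr (LBr y x) y) LZero ->
  forall p q, lin_term p y * lin_term q x = lin_term q y * lin_term p x.
Proof.
move=> hyxy.
have t4_yxy p q : (lin_term p y * lin_term q x - lin_term q y * lin_term p x)
    * lin_term p y = 0.
  have := congr1 (@t4 k) (tst_eval_eqv (fun w => Tst (w == p)%:R (w == q)%:R 0 0) hyxy).
  have [Y1 Y2] := tst_eval_lin p q y; have [X1 X2] := tst_eval_lin p q x.
  by rewrite /= Y1 Y2 X1 X2 mul0r subr0.
move=> p q; apply/eqP; rewrite -subr_eq0; apply: contraT => hD.
have /eqP := t4_yxy p q; rewrite mulf_eq0 (negPf hD) /= => /eqP bp0.
have /eqP := t4_yxy q p; rewrite -opprB mulNr oppr_eq0 mulf_eq0 (negPf hD) /= => /eqP bq0.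
by move: hD; rewrite bp0 bq0 !mul0r subrr eqxx.
Qed.

End TestEvaluation.

Section LinearParts.
Variables (k : fieldType) (r : nat).

Definition lin_row (t : lterm k 'I_r) : 'rV[k]_r := \row_w lin_term w t.
Definition linmx n (x : 'I_n -> lterm k 'I_r) : 'M[k]_(n, r) := \matrix_i lin_row (x i).

Lemma FitF_derived (z : lterm k 'I_r) : derived (lpi z) -> FitF z.
Proof.
move=> hz w; apply/lpi_eq; rewrite !lpi_br lpi0.
exact: lbr_derived (derived_lbr _ _) hz.
Qed.

Lemma phiF_row_free n (x : 'I_n -> lterm k 'I_r) : phiF x -> row_free (linmx x).
Proof.
move=> hphi; apply: inj_row_free => v hv; apply/rowP => i; rewrite mxE.
apply/eqP; apply: contraT => hvi; exfalso.
apply: (hphi (fun i => v 0 i)); first by exists i.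
apply: FitF_derived; apply/derivedP => w.
rewrite lpi_lsum big_map lin_sum big_enum /=.
have /rowP/(_ w) := hv; rewrite !mxE => {}hv; apply: etrans hv.
by apply: eq_bigr => j _; rewrite lpiZ linZ lin_lpi !mxE.
Qed.

Lemma derived_of_yxy n (x : 'I_n -> lterm k 'I_r) y : (2 <= n)%N -> row_free (linmx x) ->
  (forall i, eqv (LBr (LBr y (x i)) y) LZero) -> derived (lpi y).
Proof.
move=> hn hfree hyx; apply/derivedP => w; rewrite lin_lpi.
suff /rowP/(_ w) : lin_row y = 0 by rewrite !mxE.
apply: contraTeq hn => hy; rewrite -ltnNge ltnS -(eqP hfree).
have [w0 hw0] : exists w0, lin_term w0 y != 0.
  apply/existsP; apply: contraNT hy => /existsPn h0; apply/eqP/rowP => q.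
  by rewrite !mxE; apply/eqP; rewrite -[_ == 0]negbK h0.
apply: leq_trans (rank_leq_row (lin_row y)); apply: mxrankS; apply/row_subP => i.
apply/sub_rVP; exists (lin_term w0 (x i) / lin_term w0 y); apply/rowP => q.
rewrite !mxE; apply: (mulfI hw0); rewrite lin_term_wedge //; field; exact: hw0.
Qed.

End LinearParts.

Lemma row_free_retraction (k : fieldType) r n (x : 'I_n -> lterm k 'I_r) :
  row_free (linmx x) ->
  exists phi : 'I_r -> fml k 'I_n, forall i, derived (fmlhom phi (lpi (x i)) - gen i).
Proof.
move=> /row_freeP [B hB]; exists (fun w => \sum_j B w j *: gen j) => i.
apply/derivedP => j; rewrite linD -scaleN1r linZ lin_fmlhom lin_gen mulN1r.
apply/eqP; rewrite subr_eq0; apply/eqP.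
have /matrixP/(_ i j) := hB; rewrite !mxE => <-; apply: eq_bigr => w _.
rewrite lin_lpi !mxE lin_sum (bigD1 j) //= linZ lin_gen eqxx mulr1 big1 ?addr0 // => j' hj'.
by rewrite linZ lin_gen (negPf hj') mulr0.
Qed.

Lemma ev_char_poly_coef0 (k : fieldType) n N (M : 'M[{mpoly k[n]}]_N) :
  map_mx (meval (fun _ => 0)) M = 1%:M -> meval (fun _ => 0) (char_poly M)`_0 != 0 :> k.
Proof.
move=> hM; rewrite char_poly_det rmorphM rmorphXn rmorphN1 -det_map_mx hM.
by rewrite det1 mulr1 signr_eq0.
Qed.

Section SystemRange.
Variables (k : fieldType) (n m l : nat) (f : 'I_m -> 'I_l -> {mpoly k[n]}).
Local Notation L := (fml k 'I_n).
Local Notation K := #|{: 'I_n * 'I_n}|.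

Definition sys_range (w : 'I_m -> L) := exists u : 'I_l -> L,
  (forall j, derived (u j)) /\ forall i, w i = \sum_(j <- enum 'I_l) actp gen (u j) (f i j).

Lemma eq_sys_range w1 w2 : w1 =1 w2 -> sys_range w1 -> sys_range w2.
Proof. by move=> /funext ->. Qed.

Lemma sys_range0 : sys_range (fun _ => 0).
Proof.
exists (fun _ => 0); split => [j|i]; first exact: derived0.
by rewrite big1 // => j _; rewrite actp0l.
Qed.

Lemma sys_rangeD w1 w2 : sys_range w1 -> sys_range w2 -> sys_range (fun i => w1 i + w2 i).
Proof.
move=> [u1 [h1 e1]] [u2 [h2 e2]]; exists (fun j => u1 j + u2 j); split.
  by move=> j; apply: derivedD.
by move=> i; rewrite e1 e2 -big_split; apply: eq_bigr => j _; rewrite actpDl.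
Qed.

Lemma sys_range_actp w p : sys_range w -> sys_range (fun i => actp gen (w i) p).
Proof.
move=> [u [h e]]; exists (fun j => actp gen (u j) p); split.
  by move=> j; apply: actp_derived.
move=> i; rewrite e actp_suml; apply: eq_bigr => j _.
by rewrite !actpM ?h // mulrC.
Qed.

Definition mxcomb (Q : 'M[{mpoly k[n]}]_(m, K.+1)) i := \sum_j actp gen (gen2 j) (Q i j).

Lemma mxcombD Q1 Q2 i : mxcomb (Q1 + Q2) i = mxcomb Q1 i + mxcomb Q2 i.
Proof. by rewrite /mxcomb -big_split; apply: eq_bigr => j _; rewrite mxE actpDr. Qed.
Lemma mxcombZ p Q i : mxcomb (p *: Q) i = actp gen (mxcomb Q i) p.
Proof. by rewrite /mxcomb actp_gen2_comb; apply: eq_bigr => j _; rewrite mxE mulrC. Qed.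

Lemma sys_range_mxcombD Q1 Q2 :
  sys_range (mxcomb Q1) -> sys_range (mxcomb Q2) -> sys_range (mxcomb (Q1 + Q2)).
Proof. by move=> h1 h2; apply: eq_sys_range (sys_rangeD h1 h2) => i; rewrite mxcombD. Qed.
Lemma sys_range_mxcombZ p Q : sys_range (mxcomb Q) -> sys_range (mxcomb (p *: Q)).
Proof. by move=> h; apply: eq_sys_range (sys_range_actp p h) => i; rewrite mxcombZ. Qed.

(* By Cayley-Hamilton, (char_poly M)`_0 P is a combination of the P M^i with i >= 1. *)
Lemma sys_range_char_poly (M : 'M[{mpoly k[n]}]_K.+1) P :
  (forall Q, sys_range (mxcomb Q) -> sys_range (mxcomb (Q *m M))) ->
  sys_range (mxcomb (P *m M)) -> sys_range (mxcomb ((char_poly M)`_0 *: P)).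
Proof.
move=> hM hPM.
have hp q : sys_range (mxcomb (P *m horner_mx M q - q`_0 *: P)).
  elim/poly_ind: q => [|q a IH].
    by rewrite rmorph0 mulmx0 coef0 scale0r subrr; apply: eq_sys_range sys_range0 => i;
      rewrite /mxcomb big1 // => j _; rewrite mxE actp0r.
  rewrite rmorphD rmorphM /= horner_mx_X horner_mx_C coefD coefMX coefC /= add0r.
  rewrite mulmxDr mul_mx_scalar addrK mulmxA.
  have -> : P *m horner_mx M q *m M = (P *m horner_mx M q - q`_0 *: P) *m M + q`_0 *: (P *m M).
    by rewrite mulmxBl -scalemxAl subrK.
  by apply: sys_range_mxcombD; [apply: hM | apply: sys_range_mxcombZ].
have := sys_range_mxcombZ (-1) (hp (char_poly M)).
by rewrite Cayley_Hamilton mulmx0 sub0r scaleN1r opprK.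
Qed.

End SystemRange.

Section NearIdentitySubstitution.
Variables (k : fieldType) (n : nat).
Local Notation L := (fml k 'I_n).
Local Notation K := #|{: 'I_n * 'I_n}|.
Local Notation ev := (meval (fun _ : 'I_n => (0 : k))).
Variables (X : 'I_n -> L) (hX : forall i, derived (X i - gen i)).
Local Notation tau := (fmlhom X).

Lemma fmlhom_actp_gen u p : derived u -> tau (actp gen u p) = actp gen (tau u) p.
Proof.
move=> hu; rewrite fmlhom_actp; apply: actp_derived_eq; last exact: fmlhom_derived.
by move=> i; rewrite fmlhom_var.
Qed.

Lemma fmlhom_gen2 j : exists M : 'I_K.+1 -> {mpoly k[n]},
  tau (gen2 j) = \sum_i actp gen (gen2 i) (M i) /\ forall i, ev (M i) = (j == i)%:R.
Proof.
have [hj|[a [b hj]]] := @gen2P k n j.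
  exists (fun i => (j == i)%:R); split; last by move=> i; rewrite rmorph_nat.
  by rewrite -gen2_delta hj fmlhom0.
have [Za eZa] := derived_gen2_span (hX a); have [Zb eZb] := derived_gen2_span (hX b).
exists (fun i => (j == i)%:R - Zb i * 'X_a + Za i * 'X_b); split; last first.
  by move=> i; rewrite rmorphD rmorphB !rmorphM /= !mevalXU !mulr0 subr0 addr0 rmorph_nat.
rewrite hj fmlhom_lbr !fmlhom_var -(subrK (gen a) (X a)) -(subrK (gen b) (X b)).
move: (X a - gen a) (X b - gen b) (hX a) (hX b) eZa eZb => za zb hza hzb eZa eZb.
rewrite lbrDl !lbrDr (lbr_derived hza hzb) add0r -hj.
rewrite (lbrC (gen a)) -!actpXU eZa eZb !actp_gen2_comb gen2_delta -sumrN -!big_split /=.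
by apply: eq_bigr => i _; rewrite !actpDr actpNr [RHS]addrC (addrC (actp _ _ (j == i)%:R)).
Qed.

Variables (m l : nat) (f : 'I_m -> 'I_l -> {mpoly k[n]}).

Lemma sys_range_fmlhom w : sys_range f w -> sys_range f (fun i => tau (w i)).
Proof.
move=> [u [h e]]; exists (fun j => tau (u j)); split; first by move=> j; apply: fmlhom_derived.
by move=> i; rewrite e fmlhom_sum; apply: eq_bigr => j _; rewrite fmlhom_actp_gen.
Qed.

Lemma sys_range_loc_scale c : (forall i, derived (c i)) -> sys_range f (fun i => tau (c i)) ->
  exists s, ev s != 0 /\ sys_range f (fun i => actp gen (c i) s).
Proof.
move=> hc hN; have /choice [Mf hM] := fmlhom_gen2.
pose M := \matrix_(j, i) Mf j i : 'M[{mpoly k[n]}]_K.+1.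
have /choice [Pf hP] := fun i => derived_gen2_span (hc i).
pose P := \matrix_(i, j) Pf i j : 'M[{mpoly k[n]}]_(m, K.+1).
have mxcombP i : mxcomb P i = c i.
  by rewrite hP /mxcomb; apply: eq_bigr => j _; rewrite mxE.
have mxcombM Q i : mxcomb (Q *m M) i = tau (mxcomb Q i).
  have tau_gen2 j p : tau (actp gen (gen2 j) p) = \sum_i actp gen (gen2 i) (Mf j i * p).
    by rewrite fmlhom_actp_gen ?(proj1 (hM j)) ?actp_gen2_comb //; apply: gen2_derived.
  rewrite /mxcomb fmlhom_sum; under [RHS]eq_bigr do rewrite tau_gen2.
  rewrite exchange_big /=; apply: eq_bigr => j _.
  by rewrite !mxE actp_sumr; apply: eq_bigr => j' _; rewrite !mxE mulrC.
exists (char_poly M)`_0; split.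
  by apply: ev_char_poly_coef0; apply/matrixP => a b; rewrite !mxE (proj2 (hM a)).
apply: eq_sys_range (sys_range_char_poly (M := M) (P := P) _ _) => [i|Q hQ|].
- by rewrite mxcombZ mxcombP.
- by apply: eq_sys_range (sys_range_fmlhom hQ) => i; rewrite mxcombM.
- by apply: eq_sys_range hN => i; rewrite mxcombM mxcombP.
Qed.

End NearIdentitySubstitution.

Section Localisation.
Variables (k : fieldType) (n l m : nat) (f : 'I_m -> 'I_l -> {mpoly k[n]}).
Local Notation ev := (meval (fun _ : 'I_n => (0 : k))).

Lemma notin_Delta (p : {mpoly k[n]}) : ev p != 0 -> ~ in_Delta p.
Proof.
move=> hp [g eg]; move: hp; rewrite eg rmorph_sum big1 ?eqxx // => i _.
by rewrite rmorphM /= mevalXU mulr0.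
Qed.

Lemma loc_solvable_of_range (c : 'I_m -> lterm k 'I_n) s : ev s != 0 ->
  sys_range f (fun i => actp gen (lpi (c i)) s) -> loc_solvable f c.
Proof.
move=> hs [u [hu he]]; exists s, 1, (fun j => lrepr (u j)).
split; first exact: notin_Delta.
split; first by apply: notin_Delta; rewrite rmorph1 oner_eq0.
split=> [j|i]; first by apply/in_sq_derived; rewrite lreprK.
apply/lpi_eq; rewrite lpi_pact actp1 lpi_lsub lpi_sys_lhs lpi_pact lpi0 he.
by apply/eqP; rewrite subr_eq0; apply/eqP; apply: eq_bigr => j _; rewrite lreprK.
Qed.

End Localisation.

Lemma derived_eq0 (k : fieldType) n (q : fml k 'I_n) : (n <= 1)%N -> derived q -> q = 0.
Proof.
move=> hn /derived_gen2_span [P ->]; rewrite big1 // => j _.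
have [->|[a [b ->]]] := @gen2P k n j; first exact: actp0l.
have val0 (i : 'I_n) : val i = 0%N by apply/eqP; rewrite -leqn0 -ltnS (leq_trans (ltn_ord i)).
suff -> : b = a by rewrite lbrr actp0l.
by apply/val_inj; rewrite /= !val0.
Qed.

Lemma sys_range_of_solution (k : fieldType) r n l m (f : 'I_m -> 'I_l -> {mpoly k[n]})
    (c : 'I_m -> lterm k 'I_n) (x : 'I_n -> lterm k 'I_r) (y : 'I_l -> lterm k 'I_r)
    (phi : 'I_r -> fml k 'I_n) :
  let X i := fmlhom phi (lpi (x i)) in
  (forall i, derived (X i - gen i)) -> (forall j, derived (lpi (y j))) ->
  (forall i, eqv (lsub (sys_lhs f x y i) (lsubst x (c i))) LZero) ->
  sys_range f (fun i => fmlhom X (lpi (c i))).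
Proof.
move=> X hX hy heq; exists (fun j => fmlhom phi (lpi (y j))).
split=> [j|i]; first exact: fmlhom_derived.
have /lpi_eq := heq i; rewrite lpi_lsub lpi_sys_lhs lpi_lsubst lpi0 => /eqP.
rewrite subr_eq0 => /eqP e.
rewrite /X -fmlhom_comp -e fmlhom_sum; apply: eq_bigr => j _.
by rewrite fmlhom_actp; apply: actp_derived_eq => //; apply: fmlhom_derived.
Qed.

Theorem lemma3p10 (k : finFieldType) (r : nat) (hr : (2 <= r)%N)
  (n l m : nat) (hn : (n <= r)%N)
  (f : 'I_m -> 'I_l -> {mpoly k[n]}) (c : 'I_m -> lterm k 'I_n)
  (hc : forall i, in_sq (c i))
  (hS : ~ loc_solvable f c) :
  Phi7_sentence_holds r f c.
Proof.
move=> x y hphi hyx; apply/existsNP => heq; apply: hS.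
have hc' i : derived (lpi (c i)) by apply/in_sq_derived.
have [hn1|hn2] := leqP n 1.
  apply: (loc_solvable_of_range (s := 1)); first by rewrite rmorph1 oner_eq0.
  apply: eq_sys_range (sys_range0 f) => i.
  by rewrite (derived_eq0 hn1 (hc' i)) actp0l.
have hfree := phiF_row_free hphi.
have [phi hX] := row_free_retraction hfree.
have hy j := derived_of_yxy hn2 hfree (hyx j).
have [s [hs hrange]] := sys_range_loc_scale hX hc' (sys_range_of_solution hX hy heq).
exact: loc_solvable_of_range hs hrange.
Qed.
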